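(* Let $n,m,q\ge1$ be integers. Identify the space of polynomial maps $\mathbb{R}^n\to\mathbb{R}^m$ of degree $\le q$ vanishing at $0$ with $\mathbb{R}^l$ via coefficients $a=(a_\iota)_{0<|\iota|\le q}$, $a_\iota\in\mathbb{R}^m$, and set $f(a,x)=\sum_\iota a_\iota x^\iota$. Then \[ E=\{a\in\mathbb{R}^l\;:\; f(a,\cdot)\text{ has a local Pareto optimum at }0\} \] is a semialgebraic subset of $\mathbb{R}^l$.
   Context: A subset of $\mathbb{R}^N$ is semialgebraic if it is a finite union of sets each defined by finitely many polynomial equations and strict polynomial inequalities. For $g=(g_1,\dots,g_m):U\to\mathbb{R}^m$, a point $x$ dominates $y$ if $g_i(x)\ge g_i(y)$ for all $i$ and $g_j(x)>g_j(y)$ for some $j$; $p$ is a Pareto optimum on a set if no point of the set dominates it; $p$ is a local Pareto optimum if there is a neighborhood of $p$ on which $p$ is a Pareto optimum. *)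

From HB Require Import structures.
From mathcomp Require Import all_boot all_order all_algebra.
From mathcomp Require Import reals.
From mathcomp Require Import mpoly.

Set Implicit Arguments.
Unset Strict Implicit.
Unset Printing Implicit Defensive.

Import Order.TTheory GRing.Theory Num.Theory.
Local Open Scope ring_scope.

Section Defs.
Variable R : realType.

Definition basic_sa_pt (N : nat) (PQ : seq {mpoly R[N]} * seq {mpoly R[N]})
  (x : 'I_N -> R) : bool :=
  all (fun p => p.@[x] == 0) PQ.1 && all (fun p => 0 < p.@[x]) PQ.2.

Definition semialgebraic (N : nat) (S : ('I_N -> R) -> Prop) : Prop :=
  exists s : seq (seq {mpoly R[N]} * seq {mpoly R[N]}),
    forall x, S x <-> has (fun PQ => basic_sa_pt PQ x) s.

Definition semialgebraicT (I : finType) (S : (I -> R) -> Prop) : Prop :=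
  semialgebraic (fun y : 'I_#|I| -> R => S (fun i => y (enum_rank i))).

Definition dominates (n m : nat) (g : ('I_n -> R) -> ('I_m -> R))
  (x y : 'I_n -> R) : Prop :=
  (forall i, g y i <= g x i) /\ (exists j, g y j < g x j).

Definition local_pareto (n m : nat) (g : ('I_n -> R) -> ('I_m -> R))
  (p : 'I_n -> R) : Prop :=
  exists2 eps : R, 0 < eps &
    forall x : 'I_n -> R, (forall i, `|x i - p i| < eps) -> ~ dominates g x p.
End Defs.

(** Multi-indices iota in N^n with 0 < |iota| <= q (each entry is <= q). *)
Definition Mon (n q : nat) : finType :=
  {e : {ffun 'I_n -> 'I_q.+1} | (0 < \sum_(i < n) (e i : nat) <= q)%N}.

(** f(a, x) = sum_iota a_iota x^iota, with a_iota in R^m stored as a(iota, j). *)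
Definition fpoly (R : realType) (n m q : nat) (a : Mon n q * 'I_m -> R)
  (x : 'I_n -> R) : 'I_m -> R :=
  fun j => \sum_(e : Mon n q) a (e, j) * \prod_(i < n) x i ^+ (val e i : nat).

From mathcomp Require Import all_boot all_order all_algebra reals mpoly.
From mathcomp Require Import ordered_qelim qe_rcf.
Import Order.TTheory GRing.Theory Num.Theory.
Local Open Scope ring_scope.
Set Implicit Arguments.
Unset Strict Implicit.
Unset Printing Implicit Defensive.
Import ord.

(* The coefficient vectors a for which f(a, .) has a local Pareto optimum at 0
   are exactly those satisfying a first-order formula of ordered fields with
   parameters a:
     exists eps > 0, forall x, (forall i, -eps < x_i < eps) ->
       ~ ((forall j, f_j(a,0) <= f_j(a,x)) /\ (exists j, f_j(a,0) < f_j(a,x))).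
   By quantifier elimination for real closed fields (Tarski-Seidenberg), this
   formula is equivalent to a disjunction of conjunctions of polynomial
   equations and strict inequalities in a, i.e. it defines a semialgebraic set. *)

Section TermToMpoly.
Variables (R : comUnitRingType) (N : nat).

(* Inverses are sent to 0, which is harmless since only inverse-free terms are
   translated; variables of index >= N are sent to 0, their value under [env_of]. *)
Fixpoint mpoly_of_term (t : GRing.term R) : {mpoly R[N]} :=
  match t with
  | GRing.Var i => if insub i is Some j then 'X_j else 0
  | GRing.Const c => c%:MP
  | GRing.NatConst k => k%:R
  | GRing.Add a b => mpoly_of_term a + mpoly_of_term b
  | GRing.Opp a => - mpoly_of_term a
  | GRing.NatMul a k => mpoly_of_term a *+ k
  | GRing.Mul a b => mpoly_of_term a * mpoly_of_term b
  | GRing.Inv _ => 0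
  | GRing.Exp a k => mpoly_of_term a ^+ k
  end.

Definition env_of (x : 'I_N -> R) : seq R :=
  mkseq (fun i => if insub i is Some j then x j else 0) N.

Lemma nth_env_of x i : nth 0 (env_of x) i = if insub i is Some j then x j else 0.
Proof.
case: (ltnP i N) => hi; first by rewrite nth_mkseq.
rewrite nth_default ?size_mkseq //.
by case: insubP => // j; rewrite ltnNge hi.
Qed.

Lemma meval_mpoly_of_term x t :
  GRing.rterm t -> (mpoly_of_term t).@[x] = GRing.eval (env_of x) t.
Proof.
elim: t => //=.
- by move=> i _; rewrite nth_env_of; case: insub => [j|]; rewrite ?mevalXU ?meval0.
- by move=> c _; rewrite mevalC.
- by move=> k _; rewrite -mpolyC_nat mevalC.
- by move=> a IHa b IHb /andP[ra rb]; rewrite mevalD IHa ?IHb.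
- by move=> a IHa ra; rewrite mevalN IHa.
- by move=> a IHa k ra; rewrite mevalMn IHa.
- by move=> a IHa b IHb /andP[ra rb]; rewrite mevalM IHa ?IHb.
- by move=> a IHa k ra; rewrite rmorphXn /= IHa.
Qed.

End TermToMpoly.

Section QuantifierElimination.
Variable R : rcfType.

Definition sat_clause (e : seq R) (w : seq (GRing.term R) * seq (GRing.term R)) :=
  all (fun t => GRing.eval e t == 0) w.1%PAIR && all (fun t => 0 < GRing.eval e t) w.2%PAIR.

Lemma holds_odnf_w_to_oclause e ws :
  holds e (odnf_to_oform (map (@w_to_oclause R) ws)) <-> has (sat_clause e) ws.
Proof.
have holds_eqs l : holds e (foldr (fun t => And (t == 0)%oT) True l) <->
    all (fun t => GRing.eval e t == 0) l.
  elim: l => [|t l IHl] //=; rewrite IHl; split; first by case=> /eqP -> ->.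
  by case/andP=> /eqP -> ->.
have holds_pos l : holds e (foldr (fun t => And (0 <% t)%oT) True l) <->
    all (fun t => 0 < GRing.eval e t) l.
  elim: l => [|t l IHl] //=; rewrite IHl; split; first by case=> -> ->.
  by case/andP=> -> ->.
elim: ws => [|w ws IHws] /=; first by split.
rewrite /sat_clause IHws holds_eqs holds_pos; split.
  by case=> [[-> [_ [-> _]]]|->]; rewrite ?orbT.
by case/orP=> [/andP[-> ->]|->]; [left|right].
Qed.

Lemma holds_odnf_oclause_to_w e bcs : holds e (odnf_to_oform bcs) <->
  has (sat_clause e) (flatten (map (@oclause_to_w R) bcs)).
Proof.
elim: bcs => [|bc bcs IHbcs]; first by split.
rewrite [flatten _]/= has_cat.
have holds_bc : holds e (odnf_to_oform [:: bc]) <-> has (sat_clause e) (oclause_to_w bc).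
  by rewrite -holds_odnf_w_to_oclause -oclause_to_wP -oclause_neq_leq_elimP.
split.
  case/(odnf_to_oform_cat e [:: bc] bcs) => h; apply/orP.
    by left; apply/holds_bc.
  by right; apply/IHbcs.
case/orP => h; apply/(odnf_to_oform_cat e [:: bc] bcs).
  by left; apply/holds_bc.
by right; apply/IHbcs.
Qed.

(* Tarski-Seidenberg, via the quantifier elimination of [qe_rcf]. *)
Lemma formula_sat_clauses (f : formula R) :
  exists ws : seq (seq (GRing.term R) * seq (GRing.term R)),
    all (fun w => all (@GRing.rterm R) w.1%PAIR && all (@GRing.rterm R) w.2%PAIR) ws /\
    forall e, holds e f <-> has (sat_clause e) ws.
Proof.
set g := quantifier_elim (@wproj R) (to_rform f).
have wf_g : qf_form g && rformula g.
  exact: (quantifier_elim_wf (@wf_QE_wproj R) (to_rform_rformula f)).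
set bcs := qf_to_odnf g false.
exists (flatten (map (@oclause_to_w R) bcs)); split.
  have : all (@dnf_rterm R) bcs by apply: qf_to_dnf_rterm; case/andP: wf_g.
  elim: bcs => [|bc bcs IHbcs] //= /andP[rbc rbcs]; rewrite all_cat IHbcs // andbT.
  apply: sub_all (dnf_rterm_subproof rbc) => w.
  by rewrite /dnf_rterm /= !andbT.
move=> e; rewrite -holds_odnf_oclause_to_w.
have -> : holds e f <-> qf_eval e g by split => /(rcf_satP e f).
rewrite -(qf_to_dnfP e wf_g).
by split => /(qf_evalP _ (dnf_to_form_qf _)).
Qed.

End QuantifierElimination.

Lemma definable_semialgebraic (R : realType) (N : nat) (S : ('I_N -> R) -> Prop)
    (f : formula R) :
  (forall y, S y <-> holds (env_of y) f) -> semialgebraic S.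
Proof.
move=> defS; have [ws [rws holds_ws]] := @formula_sat_clauses R f.
pose mpolys := map (@mpoly_of_term R N).
exists (map (fun w => (mpolys w.1%PAIR, mpolys w.2%PAIR)) ws) => y.
rewrite defS holds_ws has_map [in X in _ <-> X](@eq_in_has _ _ (sat_clause (env_of y))) //.
move=> w /(allP rws) /andP[r1 r2].
rewrite /basic_sa_pt /sat_clause /= !all_map; congr andb; apply: eq_in_all => t ht /=.
  by rewrite meval_mpoly_of_term //; apply: (allP r1).
by rewrite meval_mpoly_of_term //; apply: (allP r2).
Qed.

Section FormulaCombinators.
Variable R : realDomainType.

Lemma holds_big_And (T : finType) e (F : T -> formula R) :
  holds e (\big[And/True]_(i : T) F i) <-> forall i, holds e (F i).
Proof.
suff holds_seq r : holds e (\big[And/True]_(i <- r) F i) <->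
    (forall i, i \in r -> holds e (F i)).
  rewrite holds_seq; split=> h i; last by move=> _; exact: h.
  by apply: h; exact: mem_index_enum.
elim: r => [|x r IHr]; rewrite ?big_nil ?big_cons /=; first by split.
rewrite IHr; split.
  by case=> hx hr i; rewrite inE => /orP[/eqP -> //|]; apply: hr.
move=> h; split; first by apply: h; rewrite inE eqxx.
by move=> i hi; apply: h; rewrite inE hi orbT.
Qed.

Lemma holds_big_Or (T : finType) e (F : T -> formula R) :
  holds e (\big[Or/False]_(i : T) F i) <-> exists i, holds e (F i).
Proof.
suff holds_seq r : holds e (\big[Or/False]_(i <- r) F i) <->
    (exists2 i, i \in r & holds e (F i)).
  by rewrite holds_seq; split => [[i _ h]|[i h]]; exists i => //; exact: mem_index_enum.
elim: r => [|x r IHr]; rewrite ?big_nil ?big_cons /=; first by split => //; case.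
rewrite IHr; split.
  by case=> [h|[i hi h]]; [exists x | exists i]; rewrite ?inE ?eqxx ?hi ?orbT.
case=> i; rewrite inE => /orP[/eqP -> h|hi h]; first by left.
by right; exists i.
Qed.

Definition Foralls (s : seq nat) (f : formula R) := foldr Forall f s.

Lemma holds_Foralls e s f : holds e (Foralls s f) <->
  forall e', (forall k, k \notin s -> nth 0 e' k = nth 0 e k) -> holds e' f.
Proof.
elim: s e => [|k s IHs] e /=.
  split; last by apply.
  by move=> h e' he; apply: eq_holds h => i; rewrite he.
split.
  move=> h e' he; move/IHs: (h (nth 0 e' k)); apply=> k' hk'.
  rewrite nth_set_nth /=; case: eqP => [-> //|/eqP nk].
  by apply: he; rewrite inE negb_or nk.
move=> h x; apply/IHs => e' he; apply: h => k'; rewrite inE negb_or => /andP[nk hk'].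
by rewrite he // nth_set_nth /= (negbTE nk).
Qed.

End FormulaCombinators.

Section LocalParetoFormula.
Variables (R : realType) (n m q : nat).
Local Notation I := (Mon n q * 'I_m)%type.
Local Notation L := #|{: I}|.

(* Variable layout: the coefficient a_(e, j) is variable [enum_rank (e, j)] < L,
   eps is variable L, and x_i is variable L + 1 + i. *)
Definition fpoly_term (j : 'I_m) (X : 'I_n -> GRing.term R) : GRing.term R :=
  \big[GRing.Add/GRing.Const 0]_(e : Mon n q)
     GRing.Mul (GRing.Var R (enum_rank ((e, j) : I)))
       (\big[GRing.Mul/GRing.Const 1]_(i < n) GRing.Exp (X i) (val e i)).

Definition x_var (i : 'I_n) : GRing.term R := GRing.Var R (L.+1 + i).
Definition eps_var : GRing.term R := GRing.Var R L.
Definition origin (i : 'I_n) : GRing.term R := GRing.Const 0.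

Definition box_formula : formula R :=
  \big[And/True]_(i < n) And (Lt (GRing.Opp eps_var) (x_var i)) (Lt (x_var i) eps_var).

Definition dominates_formula : formula R :=
  And (\big[And/True]_(j < m) Le (fpoly_term j origin) (fpoly_term j x_var))
      (\big[Or/False]_(j < m) Lt (fpoly_term j origin) (fpoly_term j x_var)).

Definition local_pareto_formula : formula R :=
  Exists L (And (Lt (GRing.Const 0) eps_var)
    (Foralls (iota L.+1 n) (Implies box_formula (Not dominates_formula)))).

Section Environment.
Variables (e : seq R) (a : I -> R) (x : 'I_n -> R).
Hypothesis e_a : forall p : I, nth 0 e (enum_rank p) = a p.
Hypothesis e_x : forall i : 'I_n, nth 0 e (L.+1 + i) = x i.

Lemma eval_fpoly_term j X :
  GRing.eval e (fpoly_term j X) = fpoly a (fun i => GRing.eval e (X i)) j.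
Proof.
rewrite /fpoly_term (@big_morph _ _ (GRing.eval e) 0 +%R (GRing.Const 0) (@GRing.Add R)) //.
apply: eq_bigr => p _ /=; rewrite e_a; congr (_ * _).
by rewrite (@big_morph _ _ (GRing.eval e) 1 *%R (GRing.Const 1) (@GRing.Mul R)).
Qed.

Lemma holds_box_formula : holds e box_formula <-> forall i, `|x i - 0| < nth 0 e L.
Proof.
rewrite holds_big_And; split => h i; move: (h i) => /=; rewrite subr0 ltr_norml e_x.
  by case=> -> ->.
by case/andP=> -> ->.
Qed.

Lemma holds_dominates_formula :
  holds e dominates_formula <-> dominates (fpoly a) x (fun _ => 0).
Proof.
have eval_x j : GRing.eval e (fpoly_term j x_var) = fpoly a x j.
  rewrite eval_fpoly_term; apply: eq_bigr => p _; congr (_ * _).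
  by apply: eq_bigr => i _; rewrite /= e_x.
have eval_0 j : GRing.eval e (fpoly_term j origin) = fpoly a (fun _ => 0) j.
  exact: eval_fpoly_term.
rewrite /dominates_formula /dominates /= holds_big_And holds_big_Or.
by split=> -[le_all [j lt_j]]; split=> [i|]; try exists j;
  move: (le_all i) || move: lt_j; rewrite /= eval_x eval_0.
Qed.

Lemma holds_local_pareto_body :
  holds e (Implies box_formula (Not dominates_formula)) <->
  ((forall i, `|x i - 0| < nth 0 e L) -> ~ dominates (fpoly a) x (fun _ => 0)).
Proof.
by rewrite /= holds_box_formula; split=> h box /holds_dominates_formula; apply: h box.
Qed.

End Environment.

Definition param_env (y : 'I_L -> R) (eps : R) : seq R := set_nth 0 (env_of y) L eps.

Lemma size_param_env y eps : size (param_env y eps) = L.+1.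
Proof. by rewrite size_set_nth size_mkseq (maxn_idPl (leqnSn _)). Qed.

Lemma nth_param_env_eps y eps : nth 0 (param_env y eps) L = eps.
Proof. by rewrite nth_set_nth /= eqxx. Qed.

Lemma nth_param_env_coef y eps (p : I) :
  nth 0 (param_env y eps) (enum_rank p) = y (enum_rank p).
Proof. by rewrite nth_set_nth /= ltn_eqF // nth_env_of valK. Qed.

Lemma holds_local_pareto_formula (y : 'I_L -> R) :
  holds (env_of y) local_pareto_formula <->
  local_pareto (fpoly (fun p : I => y (enum_rank p))) (fun _ => 0).
Proof.
rewrite /local_pareto_formula /= -/(param_env y _); split.
  case=> eps [eps_gt0 /holds_Foralls hFa]; exists eps.
    by rewrite nth_param_env_eps in eps_gt0.
  move=> x x_box; pose e := param_env y eps ++ env_of x.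
  have e_small k : (k < L.+1)%N -> nth 0 e k = nth 0 (param_env y eps) k.
    by move=> hk; rewrite nth_cat size_param_env hk.
  have e_a (p : I) : nth 0 e (enum_rank p) = y (enum_rank p).
    by rewrite e_small ?nth_param_env_coef // leqW.
  have e_x (i : 'I_n) : nth 0 e (L.+1 + i) = x i.
    by rewrite nth_cat size_param_env ltnNge leq_addr addKn nth_env_of valK.
  have body : holds e (Implies box_formula (Not dominates_formula)).
    apply: hFa => k; rewrite mem_iota negb_and -ltnNge -leqNgt => /orP[hk|hk].
      exact: e_small.
    have hk' : (size (param_env y eps) <= k)%N.
      by rewrite size_param_env (leq_trans (leq_addr n _)).
    by rewrite !nth_default // /e size_cat size_param_env size_mkseq.
  move/(holds_local_pareto_body e_a e_x): body.
  by rewrite e_small // nth_param_env_eps; apply.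
case=> eps eps_gt0 not_dom; exists eps; split; first by rewrite /= nth_param_env_eps.
apply/holds_Foralls => e e_out.
have e_small k : (k <= L)%N -> nth 0 e k = nth 0 (param_env y eps) k.
  by move=> hk; rewrite e_out // mem_iota ltnNge hk.
have e_a (p : I) : nth 0 e (enum_rank p) = y (enum_rank p).
  by rewrite e_small ?nth_param_env_coef // ltnW.
apply/(@holds_local_pareto_body _ _ (fun i => nth 0 e (L.+1 + i)) e_a (fun=> erefl)).
by rewrite e_small ?nth_param_env_eps //; apply: not_dom.
Qed.

End LocalParetoFormula.

Theorem mainTheorem3 (R : realType) (n m q : nat) :
  (0 < n)%N -> (0 < m)%N -> (0 < q)%N ->
  semialgebraicT (fun a : Mon n q * 'I_m -> R =>
                    local_pareto (fpoly a) (fun _ => 0)).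
Proof.
move=> _ _ _; apply: definable_semialgebraic => y.
exact: iff_sym (holds_local_pareto_formula y).
Qed.
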